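(* Let $G$ be a Lie group with Lie algebra $\mathfrak{g}$ and left-invariant metric given by an inner product $\langle\cdot,\cdot\rangle$ on $\mathfrak{g}$. Let $\mathfrak{n}$ be the nilradical of $\mathfrak{g}$ and $\mathfrak{r}$ its orthogonal complement, and assume $[\mathfrak{r},\mathfrak{r}]\subset\mathfrak{r}$. Let $\{r_i\}$ be an orthonormal basis of $\mathfrak{r}$. Then for all $A,B\in\mathfrak{r}$ and $Z,W\in\mathfrak{n}$: $$\langle \mathrm{M}Z,W\rangle=\langle\mathrm{M}_\mathfrak{n}Z,W\rangle+\tfrac12\sum_i\langle[\operatorname{ad}_{r_i}|_\mathfrak{n},\operatorname{ad}_{r_i}^t|_\mathfrak{n}]Z,W\rangle,$$ $$\langle\mathrm{M}A,B\rangle=\langle\mathrm{M}_\mathfrak{r}A,B\rangle-\tfrac12\operatorname{tr}(\operatorname{ad}_A|_\mathfrak{n}\operatorname{ad}_B^t|_\mathfrak{n}),$$ $$\langle\mathrm{M}A,W\rangle=-\tfrac12\operatorname{tr}(\operatorname{ad}_A|_\mathfrak{n}\operatorname{ad}_W^t|_\mathfrak{n}).$$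
   Context: For a Lie algebra $(\mathfrak{g},\mu)$ with inner product $\langle\cdot,\cdot\rangle$ and orthonormal basis $\{X_k\}$, the symmetric tensor $\mathrm{M}$ is $\mathrm{M}(X,Y)=-\tfrac12\sum_k\langle\mu(X,X_k),\mu(Y,X_k)\rangle+\tfrac14\sum_{k,j}\langle\mu(X_k,X_j),X\rangle\langle\mu(X_k,X_j),Y\rangle$, identified with the endomorphism $\mathrm{M}$ via $\langle\mathrm{M}X,Y\rangle=\mathrm{M}(X,Y)$. $\mathrm{M}_\mathfrak{n}$ (resp. $\mathrm{M}_\mathfrak{r}$) is the analogous endomorphism of $\mathfrak{n}$ (resp. $\mathfrak{r}$) with the restricted bracket and inner product. Transposes $^t$ are with respect to $\langle\cdot,\cdot\rangle$. *)

(* A finite-dimensional real Lie algebra with inner product is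
   modelled (after choosing an orthonormal basis) as 'rV[R]_n with the standard
   dot product and a Lie bracket mu. *)
From HB Require Import structures.
From mathcomp Require Import all_boot all_order all_algebra.
From mathcomp Require Import reals.
Set Implicit Arguments. Unset Strict Implicit. Unset Printing Implicit Defensive.
Import Order.TTheory GRing.Theory Num.Theory.
Local Open Scope ring_scope.

Section Defs.
Variables (R : realType) (n : nat).
Notation V := 'rV[R]_n.

Definition dot (u v : V) : R := (u *m v^T) 0 0.

Definition stdb (k : 'I_n) : V := delta_mx 0 k.

Definition lie_bracket (mu : V -> V -> V) : Prop :=
  [/\ (forall (a : R) x y z, mu (a *: x + y) z = a *: mu x z + mu y z),
      (forall (a : R) x y z, mu z (a *: x + y) = a *: mu z x + mu z y),
      (forall x, mu x x = 0) &
      (forall x y z, mu x (mu y z) + mu y (mu z x) + mu z (mu x y) = 0)].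

(* subspaces are row spaces of square matrices *)
Definition inS (S : 'M[R]_n) (v : V) : Prop := (v <= S)%MS.

Definition is_ideal (mu : V -> V -> V) (S : 'M[R]_n) : Prop :=
  forall x v, inS S v -> inS S (mu x v).

Definition itbr (mu : V -> V -> V) (xs : seq V) (y : V) : V :=
  foldr (fun x acc => mu x acc) y xs.

(* the ideal S is nilpotent as a Lie algebra: S^{k+1} = 0 for some k, where
   S^1 = S, S^{j+1} = [S, S^j] (spanned by the iterated brackets below) *)
Definition is_nilpotent_ideal (mu : V -> V -> V) (S : 'M[R]_n) : Prop :=
  exists k : nat, forall (xs : seq V) (y : V),
    size xs = k -> (forall x, x \in xs -> inS S x) -> inS S y ->
    itbr mu xs y = 0.

Definition is_nilradical (mu : V -> V -> V) (N : 'M[R]_n) : Prop :=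
  [/\ is_ideal mu N, is_nilpotent_ideal mu N &
      forall S : 'M[R]_n, is_ideal mu S -> is_nilpotent_ideal mu S ->
        (S <= N)%MS].

Definition orthc (N : 'M[R]_n) (v : V) : Prop :=
  forall w, inS N w -> dot v w = 0.

Definition onb_of (P : V -> Prop) (p : nat) (e : 'I_p -> V) : Prop :=
  [/\ (forall i j, dot (e i) (e j) = (i == j)%:R),
      (forall i, P (e i)) &
      (forall v, P v -> exists c : 'I_p -> R, v = \sum_i c i *: e i)].

(* the symmetric form M(X,Y), computed with the orthonormal basis b of the
   (sub)algebra on which mu is restricted *)
Definition Mform (mu : V -> V -> V) (p : nat) (b : 'I_p -> V) (X Y : V) : R :=
  - (1/2) * (\sum_k dot (mu X (b k)) (mu Y (b k)))
  + (1/4) * (\sum_k \sum_j dot (mu (b k) (b j)) X * dot (mu (b k) (b j)) Y).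

(* transpose of ad_x on g w.r.t. the inner product *)
Definition adT (mu : V -> V -> V) (x v : V) : V :=
  \sum_k dot v (mu x (stdb k)) *: stdb k.

Definition proj (p : nat) (e : 'I_p -> V) (v : V) : V :=
  \sum_j dot v (e j) *: e j.

(* (ad_x|_n)^t : transpose of the restriction of ad_x to n, an operator on n *)
Definition adTn (mu : V -> V -> V) (p : nat) (e : 'I_p -> V) (x v : V) : V :=
  proj e (adT mu x v).

Definition trn (p : nat) (e : 'I_p -> V) (T : V -> V) : R :=
  \sum_j dot (T (e j)) (e j).

End Defs.

From HB Require Import structures.
From mathcomp Require Import all_boot all_order all_algebra.
From mathcomp Require Import reals ring lra.
Import Order.TTheory GRing.Theory Num.Theory.
Local Open Scope ring_scope.
Set Implicit Arguments. Unset Strict Implicit.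

(** The two sums defining [M] are traces of bilinear forms, hence do not
    depend on the orthonormal basis; computing them in the concatenation of
    orthonormal bases of n and of its complement r splits each sum into
    blocks indexed by n and r.  Since n is an ideal and r a subalgebra, the
    blocks pairing two directions of the wrong kind vanish, and the others
    regroup into [M_n], [M_r] and the terms built from [ad_x|_n] and its
    transpose. *)

Definition catf T p q (g1 : 'I_p -> T) (g2 : 'I_q -> T) (k : 'I_(p + q)) : T :=
  match split k with inl i => g1 i | inr j => g2 j end.

Lemma catf_lshift T p q (g1 : 'I_p -> T) (g2 : 'I_q -> T) i :
  catf g1 g2 (lshift q i) = g1 i.
Proof. by rewrite /catf (unsplitK (inl _ i)). Qed.

Lemma catf_rshift T p q (g1 : 'I_p -> T) (g2 : 'I_q -> T) j :
  catf g1 g2 (rshift p j) = g2 j.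
Proof. by rewrite /catf (unsplitK (inr _ j)). Qed.

Lemma sum_catf (R : nmodType) T p q (g1 : 'I_p -> T) (g2 : 'I_q -> T)
    (F : T -> R) :
  \sum_k F (catf g1 g2 k) = \sum_i F (g1 i) + \sum_j F (g2 j).
Proof.
rewrite big_split_ord; congr (_ + _); apply: eq_bigr => i _.
  by rewrite catf_lshift.
by rewrite catf_rshift.
Qed.

Section LinearForms.
Variables (R : realType) (n : nat).
Notation V := 'rV[R]_n.

Definition linear_form (L : V -> R) :=
  forall (a : R) x y, L (a *: x + y) = a * L x + L y.

Definition bilinear_form (b : V -> V -> R) :=
  (forall z, linear_form (b ^~ z)) /\ (forall z, linear_form (b z)).

Section LinearForm.
Variables (L : V -> R) (L_lin : linear_form L).

Lemma linear_form0 : L 0 = 0.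
Proof. by have := L_lin 1 0 0; rewrite scale1r addr0 mul1r; lra. Qed.

Lemma linear_formN x : L (- x) = - L x.
Proof. by rewrite -[- x]addr0 -scaleN1r L_lin linear_form0 addr0 mulN1r. Qed.

Lemma linear_formB x y : L (x - y) = L x - L y.
Proof. by have := L_lin 1 x (- y); rewrite scale1r mul1r linear_formN. Qed.

Lemma linear_form_sum m (c : 'I_m -> R) (x : 'I_m -> V) :
  L (\sum_i c i *: x i) = \sum_i c i * L (x i).
Proof.
apply: (big_rec2 (fun u r => L u = r)); first exact: linear_form0.
by move=> i u r _ <-; rewrite L_lin.
Qed.

End LinearForm.

Lemma dotE (u v : V) : dot u v = \sum_k u 0 k * v 0 k.
Proof. by rewrite /dot !mxE; apply: eq_bigr => k _; rewrite mxE. Qed.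

Lemma dotC (u v : V) : dot u v = dot v u.
Proof. by rewrite !dotE; apply: eq_bigr => k _; rewrite mulrC. Qed.

Lemma dotZDl a (x y z : V) : dot (a *: x + y) z = a * dot x z + dot y z.
Proof.
rewrite !dotE mulr_sumr -big_split; apply: eq_bigr => k _ /=.
by rewrite !mxE mulrDl mulrA.
Qed.

Lemma dotZDr a (x y z : V) : dot z (a *: x + y) = a * dot z x + dot z y.
Proof. by rewrite dotC dotZDl !(dotC z). Qed.

Lemma dot_linearl (z : V) : linear_form (fun u => dot u z).
Proof. by move=> a x y; rewrite dotZDl. Qed.

Lemma dot_linearr (z : V) : linear_form (dot z).
Proof. by move=> a x y; rewrite dotZDr. Qed.

Lemma dotNl (x y : V) : dot (- x) y = - dot x y.
Proof. exact: (linear_formN (dot_linearl y)). Qed.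

Lemma dotNr (x y : V) : dot y (- x) = - dot y x.
Proof. exact: (linear_formN (dot_linearr y)). Qed.

Section Orthonormal.
Variables (P : V -> Prop) (m : nat) (e : 'I_m -> V).
Hypothesis e_onb : onb_of P e.

Lemma onb_dot i j : dot (e i) (e j) = (i == j)%:R.
Proof. by case: e_onb. Qed.

Lemma onb_mem i : P (e i).
Proof. by case: e_onb. Qed.

Lemma onb_coord (c : 'I_m -> R) j : dot (\sum_i c i *: e i) (e j) = c j.
Proof.
rewrite (linear_form_sum (dot_linearl _)).
under eq_bigr do rewrite onb_dot.
rewrite (bigD1 j) //= eqxx mulr1 big1 ?addr0 // => i /negbTE ->.
by rewrite mulr0.
Qed.

Lemma onb_expand y : P y -> y = \sum_j dot y (e j) *: e j.
Proof.
case: e_onb => _ _ e_span /e_span [c ->].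
by apply: eq_bigr => i _; rewrite onb_coord.
Qed.

Lemma onb_linear_form L y :
  linear_form L -> P y -> L y = \sum_j dot y (e j) * L (e j).
Proof. by move=> L_lin Py; rewrite {1}(onb_expand Py) linear_form_sum. Qed.

Lemma dot_proj_l v w : P w -> dot (proj e v) w = dot v w.
Proof.
move=> Pw; rewrite (linear_form_sum (dot_linearl _)).
rewrite [RHS](onb_linear_form (dot_linearr v) Pw).
by apply: eq_bigr => j _; rewrite mulrC dotC.
Qed.

End Orthonormal.

Lemma stdb_onb : onb_of (fun _ => True) (@stdb R n).
Proof.
split=> // [i j|v _]; last by exists (fun k => v 0 k); exact: row_sum_delta.
rewrite dotE (bigD1 j) //= big1 => [|k /negbTE]; rewrite /stdb !mxE ?eqxx.
  by rewrite mulr1 addr0 eq_sym.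
by rewrite eq_sym => ->; rewrite mulr0.
Qed.

Lemma bilinear_trace_onb m1 m2 (g1 : 'I_m1 -> V) (g2 : 'I_m2 -> V) b :
  onb_of (fun _ => True) g1 -> onb_of (fun _ => True) g2 -> bilinear_form b ->
  \sum_i b (g1 i) (g1 i) = \sum_j b (g2 j) (g2 j).
Proof.
move=> g1_onb g2_onb [bl br].
transitivity (\sum_i \sum_j dot (g1 i) (g2 j) * b (g2 j) (g1 i)).
  by apply: eq_bigr => i _; exact: (onb_linear_form g2_onb (bl _)).
rewrite exchange_big /=; apply: eq_bigr => j _.
rewrite [RHS](onb_linear_form g1_onb (br _)) //.
by apply: eq_bigr => i _; rewrite dotC.
Qed.

Section OrthogonalComplement.
Variables (N : 'M[R]_n) (p q : nat) (e : 'I_p -> V) (f : 'I_q -> V).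
Hypotheses (e_onb : onb_of (inS N) e) (f_onb : onb_of (orthc N) f).

Lemma orthc_sub_proj v : orthc N (v - proj e v).
Proof.
by move=> w Nw; rewrite (linear_formB (dot_linearl w)) (dot_proj_l e_onb) ?subrr.
Qed.

Lemma onb_catf : onb_of (fun _ => True) (catf e f).
Proof.
have [_ eN _] := e_onb; have [_ fO f_span] := f_onb.
split=> // [i j|v _].
  case: (split_ordP i) => i' ->; case: (split_ordP j) => j' ->;
    rewrite ?catf_lshift ?catf_rshift eq_shift ?(onb_dot e_onb) ?(onb_dot f_onb) //.
    by rewrite dotC fO.
  by rewrite fO.
have [c Ec] := f_span _ (orthc_sub_proj v).
exists (catf (fun i => dot v (e i)) c).
rewrite -[LHS](subrK (proj e v)) Ec addrC big_split_ord.
by congr (_ + _); apply: eq_bigr => i _; rewrite ?catf_lshift ?catf_rshift.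
Qed.

End OrthogonalComplement.

End LinearForms.

Section Bracket.
Variables (R : realType) (n : nat) (mu : 'rV[R]_n -> 'rV[R]_n -> 'rV[R]_n).
Notation V := 'rV[R]_n.
Hypotheses
  (muZDl : forall (a : R) x y z, mu (a *: x + y) z = a *: mu x z + mu y z)
  (muZDr : forall (a : R) x y z, mu z (a *: x + y) = a *: mu z x + mu z y).

Local Ltac linear_tac :=
  let a := fresh in let x := fresh in let y := fresh in
  move=> a x y /=; rewrite ?muZDl ?muZDr ?dotZDl ?dotZDr; ring.

Definition ad_sum m (b : 'I_m -> V) (X Y : V) : R :=
  \sum_k dot (mu X (b k)) (mu Y (b k)).

Definition bracket_sum m1 m2 (b1 : 'I_m1 -> V) (b2 : 'I_m2 -> V) (X Y : V) : R :=
  \sum_i \sum_j dot (mu (b1 i) (b2 j)) X * dot (mu (b1 i) (b2 j)) Y.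

Lemma MformE m (b : 'I_m -> V) X Y :
  Mform mu b X Y = - (1/2) * ad_sum b X Y + (1/4) * bracket_sum b b X Y.
Proof. by []. Qed.

Lemma ad_sum_onb m1 m2 (g1 : 'I_m1 -> V) (g2 : 'I_m2 -> V) X Y :
  onb_of (fun _ => True) g1 -> onb_of (fun _ => True) g2 ->
  ad_sum g1 X Y = ad_sum g2 X Y.
Proof.
move=> g1_onb g2_onb; apply: (bilinear_trace_onb g1_onb g2_onb
  (b := fun u v => dot (mu X u) (mu Y v))).
by split=> z; linear_tac.
Qed.

Lemma bracket_sum_onb m1 m2 (g1 : 'I_m1 -> V) (g2 : 'I_m2 -> V) X Y :
  onb_of (fun _ => True) g1 -> onb_of (fun _ => True) g2 ->
  bracket_sum g1 g1 X Y = bracket_sum g2 g2 X Y.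
Proof.
move=> g1_onb g2_onb; rewrite /bracket_sum.
under eq_bigr => i _.
  rewrite (bilinear_trace_onb g1_onb g2_onb
    (b := fun u v => dot (mu (g1 i) u) X * dot (mu (g1 i) v) Y)); last first.
    by split=> z; linear_tac.
  over.
rewrite exchange_big [RHS]exchange_big; apply: eq_bigr => j _ /=.
apply: (bilinear_trace_onb g1_onb g2_onb
  (b := fun u v => dot (mu u (g2 j)) X * dot (mu v (g2 j)) Y)).
by split=> z; linear_tac.
Qed.

Lemma Mform_onb m1 m2 (g1 : 'I_m1 -> V) (g2 : 'I_m2 -> V) X Y :
  onb_of (fun _ => True) g1 -> onb_of (fun _ => True) g2 ->
  Mform mu g1 X Y = Mform mu g2 X Y.
Proof.
by move=> g1_onb g2_onb; rewrite !MformE (ad_sum_onb _ _ g1_onb g2_onb)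
  (bracket_sum_onb _ _ g1_onb g2_onb).
Qed.

Lemma ad_sum_catf p q (e : 'I_p -> V) (f : 'I_q -> V) X Y :
  ad_sum (catf e f) X Y = ad_sum e X Y + ad_sum f X Y.
Proof. exact: (sum_catf _ _ (fun u => dot (mu X u) (mu Y u))). Qed.

Lemma bracket_sum_catf p q (e : 'I_p -> V) (f : 'I_q -> V) X Y :
  bracket_sum (catf e f) (catf e f) X Y =
  bracket_sum e e X Y + bracket_sum e f X Y
  + (bracket_sum f e X Y + bracket_sum f f X Y).
Proof.
pose G u v := dot (mu u v) X * dot (mu u v) Y.
rewrite /bracket_sum -/(G _ _) (sum_catf _ _ (fun u => \sum_j G u (catf e f j))).
by rewrite -!big_split /=; congr (_ + _); apply: eq_bigr => i _;
  rewrite (sum_catf _ _ (G _)).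
Qed.

Lemma bracket_sum_eq0l m1 m2 (b1 : 'I_m1 -> V) (b2 : 'I_m2 -> V) X Y :
  (forall i j, dot (mu (b1 i) (b2 j)) X = 0) -> bracket_sum b1 b2 X Y = 0.
Proof. by move=> b12X; do 2!apply: big1 => ? _; rewrite b12X mul0r. Qed.

Lemma bracket_sum_eq0r m1 m2 (b1 : 'I_m1 -> V) (b2 : 'I_m2 -> V) X Y :
  (forall i j, dot (mu (b1 i) (b2 j)) Y = 0) -> bracket_sum b1 b2 X Y = 0.
Proof. by move=> b12Y; do 2!apply: big1 => ? _; rewrite b12Y mulr0. Qed.

Lemma dot_mu_linear x w : linear_form (fun u => dot (mu x u) w).
Proof. by linear_tac. Qed.

Lemma adT_adjoint x v w : dot (adT mu x v) w = dot v (mu x w).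
Proof.
rewrite (linear_form_sum (dot_linearl w)).
rewrite [RHS](onb_linear_form (stdb_onb R n) (L := fun u => dot v (mu x u))) //;
  last by linear_tac.
by apply: eq_bigr => k _; rewrite mulrC dotC.
Qed.

Lemma adTn_adjoint (P : V -> Prop) p (e : 'I_p -> V) x v w :
  onb_of P e -> P w -> dot (adTn mu e x v) w = dot v (mu x w).
Proof. by move=> e_onb Pw; rewrite (dot_proj_l e_onb _ Pw) adT_adjoint. Qed.

Lemma dot_mu_adTn p (e : 'I_p -> V) x Z W :
  dot (mu x (adTn mu e x Z)) W =
  \sum_i dot (mu x (e i)) Z * dot (mu x (e i)) W.
Proof.
rewrite (linear_form_sum (dot_mu_linear x W)).
by apply: eq_bigr => i _; rewrite adT_adjoint dotC.
Qed.

Lemma trn_ad_adTn (P : V -> Prop) p (e : 'I_p -> V) A W :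
  onb_of P e -> (forall i, P (mu W (e i))) ->
  trn e (fun v => mu A (adTn mu e W v)) = ad_sum e A W.
Proof.
move=> e_onb PWe; rewrite /trn.
under eq_bigr do rewrite (linear_form_sum (dot_mu_linear A _)).
rewrite exchange_big; apply: eq_bigr => i _ /=.
rewrite [RHS](onb_linear_form e_onb (dot_linearr _) (PWe i)).
by apply: eq_bigr => j _; rewrite adT_adjoint dotC.
Qed.

End Bracket.

Section IdealDecomposition.
Variables (R : realType) (n p q : nat) (mu : 'rV[R]_n -> 'rV[R]_n -> 'rV[R]_n).
Variables (N : 'M[R]_n) (e : 'I_p -> 'rV[R]_n) (f : 'I_q -> 'rV[R]_n).
Notation V := 'rV[R]_n.
Hypotheses
  (muZDl : forall (a : R) x y z, mu (a *: x + y) z = a *: mu x z + mu y z)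
  (muZDr : forall (a : R) x y z, mu z (a *: x + y) = a *: mu z x + mu z y)
  (mu_alt : forall x, mu x x = 0).
Hypotheses (N_ideal : is_ideal mu N)
  (e_onb : onb_of (inS N) e) (f_onb : onb_of (orthc N) f)
  (orthc_mu : forall a b, orthc N a -> orthc N b -> orthc N (mu a b)).

Lemma mu_anti x y : mu x y = - mu y x.
Proof.
have muD u v w : mu (u + v) w = mu u w + mu v w.
  by have := muZDl 1 u v w; rewrite !scale1r.
have muDr u v w : mu w (u + v) = mu w u + mu w v.
  by have := muZDr 1 u v w; rewrite !scale1r.
apply/eqP; rewrite -addr_eq0; have := mu_alt (x + y).
by rewrite muD !muDr !mu_alt add0r addr0 => ->.
Qed.

Lemma ideal_mul_l x v : inS N v -> inS N (mu v x).
Proof. by move=> Nv; rewrite /inS mu_anti eqmx_opp; exact: N_ideal. Qed.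

Lemma dot_inS_orthc w a : inS N w -> orthc N a -> dot w a = 0.
Proof. by move=> Nw Na; rewrite dotC; exact: Na. Qed.

Lemma ad_sum_anti m (b : 'I_m -> V) X Y :
  ad_sum mu b X Y = \sum_k dot (mu (b k) X) (mu (b k) Y).
Proof. by apply: eq_bigr => k _; rewrite (mu_anti X) (mu_anti Y) dotNl dotNr opprK. Qed.

Lemma bracket_sumC m1 m2 (b1 : 'I_m1 -> V) (b2 : 'I_m2 -> V) X Y :
  bracket_sum mu b2 b1 X Y = bracket_sum mu b1 b2 X Y.
Proof.
rewrite /bracket_sum exchange_big; do 2!apply: eq_bigr => ? _.
by rewrite mu_anti dotNl dotNl mulrNN.
Qed.

Lemma Mform_split X Y :
  Mform mu (@stdb R n) X Y =
  - (1/2) * (ad_sum mu e X Y + ad_sum mu f X Y)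
  + (1/4) * (bracket_sum mu e e X Y + bracket_sum mu e f X Y
             + (bracket_sum mu f e X Y + bracket_sum mu f f X Y)).
Proof.
rewrite (Mform_onb muZDl muZDr _ _ (stdb_onb R n) (onb_catf e_onb f_onb)).
by rewrite MformE ad_sum_catf bracket_sum_catf.
Qed.

Lemma Mform_ideal Z W : inS N Z -> inS N W ->
  Mform mu (@stdb R n) Z W =
  Mform mu e Z W
  + (1/2) * \sum_i dot (mu (f i) (adTn mu e (f i) Z)
                        - adTn mu e (f i) (mu (f i) Z)) W.
Proof.
move=> NZ NW.
have ad_commutator i :
    dot (mu (f i) (adTn mu e (f i) Z) - adTn mu e (f i) (mu (f i) Z)) W =
    \sum_a dot (mu (f i) (e a)) Z * dot (mu (f i) (e a)) W
    - dot (mu (f i) Z) (mu (f i) W).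
  rewrite (linear_formB (dot_linearl W)) (dot_mu_adTn muZDr).
  by rewrite (adTn_adjoint muZDr _ _ e_onb NW).
have ff0 : bracket_sum mu f f Z W = 0.
  apply: bracket_sum_eq0l => i j.
  by apply: orthc_mu => //; exact: (onb_mem f_onb).
under eq_bigr do rewrite ad_commutator.
rewrite Mform_split MformE sumrB -/(bracket_sum mu f e Z W) -ad_sum_anti.
rewrite ff0 (bracket_sumC e f); lra.
Qed.

Lemma bracket_sum_orthc_eq0 A Y :
  orthc N A ->
  [/\ bracket_sum mu e e A Y = 0, bracket_sum mu e f A Y = 0
    & bracket_sum mu f e A Y = 0].
Proof.
move=> NA; have eN := onb_mem e_onb.
by split; apply: bracket_sum_eq0l => i j; apply: dot_inS_orthc => //;
  [exact: N_ideal | exact: ideal_mul_l | exact: N_ideal].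
Qed.

Lemma Mform_orthc A B : orthc N A -> orthc N B ->
  Mform mu (@stdb R n) A B =
  Mform mu f A B - (1/2) * trn e (fun v => mu A (adTn mu e B v)).
Proof.
move=> NA NB; rewrite Mform_split MformE (trn_ad_adTn muZDr _ e_onb) => [|i].
  by have [-> -> ->] := bracket_sum_orthc_eq0 B NA; lra.
by apply: N_ideal; exact: (onb_mem e_onb).
Qed.

Lemma Mform_orthc_ideal A W : orthc N A -> inS N W ->
  Mform mu (@stdb R n) A W = - (1/2) * trn e (fun v => mu A (adTn mu e W v)).
Proof.
move=> NA NW; rewrite Mform_split (trn_ad_adTn muZDr _ e_onb) => [|i].
  have [-> -> ->] := bracket_sum_orthc_eq0 W NA.
  have -> : bracket_sum mu f f A W = 0.
    apply: bracket_sum_eq0r => i j.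
    by apply: orthc_mu => //; exact: (onb_mem f_onb).
  have -> : ad_sum mu f A W = 0.
    apply: big1 => j _; have fj := onb_mem f_onb j.
    by apply: (orthc_mu NA fj); exact: ideal_mul_l.
  lra.
by apply: N_ideal; exact: (onb_mem e_onb).
Qed.

End IdealDecomposition.

Unset Implicit Arguments.
Theorem lemma3p2 (R : realType) (n p q : nat)
  (mu : 'rV[R]_n -> 'rV[R]_n -> 'rV[R]_n) (N : 'M[R]_n)
  (e : 'I_p -> 'rV[R]_n) (f : 'I_q -> 'rV[R]_n) :
  lie_bracket mu ->
  is_nilradical mu N ->
  onb_of (inS N) e ->
  onb_of (orthc N) f ->
  (forall a b, orthc N a -> orthc N b -> orthc N (mu a b)) ->
  [/\ (forall Z W, inS N Z -> inS N W ->
         Mform mu (@stdb R n) Z W =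
         Mform mu e Z W
         + (1/2) * \sum_i dot (mu (f i) (adTn mu e (f i) Z)
                               - adTn mu e (f i) (mu (f i) Z)) W),
      (forall A B, orthc N A -> orthc N B ->
         Mform mu (@stdb R n) A B =
         Mform mu f A B
         - (1/2) * trn e (fun v => mu A (adTn mu e B v))) &
      (forall A W, orthc N A -> inS N W ->
         Mform mu (@stdb R n) A W =
         - (1/2) * trn e (fun v => mu A (adTn mu e W v)))].
Proof.
move=> [muZDl muZDr mu_alt _] [N_ideal _ _] e_onb f_onb orthc_mu.
split.
- exact: Mform_ideal muZDl muZDr mu_alt e_onb f_onb orthc_mu.
- exact: Mform_orthc muZDl muZDr mu_alt N_ideal e_onb f_onb.
- exact: Mform_orthc_ideal muZDl muZDr mu_alt N_ideal e_onb f_onb orthc_mu.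
Qed.
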